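(* Let $\mathrm A$ and $\mathrm F$ be nontrivial systems of Bilocal Classical Theory (BCT), let $\rho=\sum_ip_i|i)_{\mathrm A}$ be a deterministic state of $\mathrm A$, and let $\Psi=\sum_{i,j,s}q_{ijs}|(ij)_s)_{\mathrm{AF}}$ be a deterministic state of $\mathrm{AF}$ that is a dilation of $\rho$. Let $\mathrm E$ be the system of the same size as $\mathrm A$ and let $\Pi=\sum_{i,k,s}p_{iks}|(ik)_s)_{\mathrm{AE}}$ with $p_{ik+}=\delta_{ik}p_i$ and $p_{ik-}=0$ (i.e. $\Pi=\sum_ip_i|(ii)_+)_{\mathrm{AE}}$). Then there exists a channel $\mathcal C\in\mathsf{Tr}_1(\mathrm E\to\mathrm F)$ such that $(\mathcal I_{\mathrm A}\boxtimes\mathcal C)\Pi=\Psi$.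
   Context: BCT is an operational probabilistic theory with the following structure. Systems: a trivial system $\mathrm I$ and, for every integer $D>1$, exactly one system of size $D$. For a nontrivial system $\mathrm A$ of size $D_{\mathrm A}$, every state is a nonnegative combination $\sum_i p_i|i)_{\mathrm A}$ of the $D_{\mathrm A}$ pure states $|i)_{\mathrm A}$, which are the affinely independent vertices of the simplex of deterministic states (deterministic iff $\sum_ip_i=1$); each system has a unique deterministic effect $e_{\mathrm A}$ with $(e_{\mathrm A}|i)_{\mathrm A}=1$. For nontrivial $\mathrm A,\mathrm B$, the composite $\mathrm{AB}$ has size $2D_{\mathrm A}D_{\mathrm B}$ and pure states $|(ij)_s)_{\mathrm{AB}}$, $1\le i\le D_{\mathrm A}$, $1\le j\le D_{\mathrm B}$, $s\in\{+,-\}$; $|i)_{\mathrm A}\boxtimes|j)_{\mathrm B}=\tfrac12\sum_{s=\pm}|(ij)_s)_{\mathrm{AB}}$. Transformations act linearly. Channels $\mathcal C\in\mathsf{Tr}_1(\mathrm E\to\mathrm F)$ between nontrivial systems are exactly those for which, for each $k\in\{1,\dots,D_{\mathrm E}\}$, there is a probability distribution $\{\lambda^{(k)}_{j\tau}\}$ over $(j,\tau)\in\{1,\dots,D_{\mathrm F}\}\times\{+,-\}$ with $(\mathcal I_{\mathrm A}\boxtimes\mathcal C)|(ik)_s)_{\mathrm{AE}}=\sum_{j,\tau}\lambda^{(k)}_{j\tau}|(ij)_{\tau s})_{\mathrm{AF}}$ for every system $\mathrm A$ and all $i,k,s$ (signs multiply as $\pm1$). A dilation of a state $\rho$ of $\mathrm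 A$ is a state $\Psi$ of $\mathrm{AF}$ with $(\mathcal I_{\mathrm A}\boxtimes e_{\mathrm F})\Psi=\rho$. *)

(* BCT states are encoded by their coefficient vectors on the
   pure states (which are affinely independent, so coefficients are unique). *)
From HB Require Import structures.
From mathcomp Require Import all_boot all_order all_algebra.
Set Implicit Arguments. Unset Strict Implicit. Unset Printing Implicit Defensive.
Import Order.TTheory GRing.Theory Num.Theory.
Local Open Scope ring_scope.

Section BCT.
Variable R : realFieldType.

(* Signs s in {+,-} are encoded as bool: true = +, false = -.
   Multiplication of signs as +-1: (+)(+)=(+), (-)(-)=(+), otherwise (-). *)
Definition sgmul (t s : bool) : bool := t == s.

Definition bct_state (D : nat) (p : 'I_D -> R) : Prop := forall i, 0 <= p i.
Definition bct_det_state (D : nat) (p : 'I_D -> R) : Prop :=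
  bct_state p /\ \sum_(i < D) p i = 1.

Definition bct_state2 (DA DB : nat) (q : 'I_DA -> 'I_DB -> bool -> R) : Prop :=
  forall i j s, 0 <= q i j s.
Definition bct_det_state2 (DA DB : nat) (q : 'I_DA -> 'I_DB -> bool -> R) : Prop :=
  bct_state2 q /\ \sum_(i < DA) \sum_(j < DB) \sum_(s : bool) q i j s = 1.

(* (I_A [x] e_F) applied to sum q i j s |(ij)_s): since
   (I_A [x] e_F)|(ij)_s) = |i)_A, the coefficient of |i)_A is sum_{j,s} q i j s. *)
Definition marg_A (DA DF : nat) (q : 'I_DA -> 'I_DF -> bool -> R) : 'I_DA -> R :=
  fun i => \sum_(j < DF) \sum_(s : bool) q i j s.

Definition is_dilation (DA DF : nat) (rho : 'I_DA -> R)
  (Psi : 'I_DA -> 'I_DF -> bool -> R) : Prop :=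
  forall i, marg_A Psi i = rho i.

(* A channel E -> F is given by the family of probability distributions
   lam k over (j, tau), for each k < DE. *)
Definition is_channel (DE DF : nat) (lam : 'I_DE -> 'I_DF -> bool -> R) : Prop :=
  forall k, (forall j t, 0 <= lam k j t) /\ \sum_(j < DF) \sum_(t : bool) lam k j t = 1.

(* Action of I_A [x] C on a (linear combination of) state(s) of AE:
   (I_A [x] C)|(ik)_s) = sum_{j,tau} lam k j tau |(ij)_{tau s}). The result
   is the coefficient vector on the pure states |(ij)_t') of AF. *)
Definition apply_channel (DA DE DF : nat) (lam : 'I_DE -> 'I_DF -> bool -> R)
  (X : 'I_DA -> 'I_DE -> bool -> R) : 'I_DA -> 'I_DF -> bool -> R :=
  fun i j t' => \sum_(k < DE) \sum_(s : bool) \sum_(t : bool)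
     (if sgmul t s == t' then lam k j t * X i k s else 0).

Definition Pi_state (DA : nat) (p : 'I_DA -> R) : 'I_DA -> 'I_DA -> bool -> R :=
  fun i k s => if s && (i == k) then p i else 0.

End BCT.

(* Take the channel that sends k to the conditional distribution of
   Psi given i = k, that is lam k j t = Psi k j t / rho k, and the uniform
   distribution when rho k = 0.  Applied to Pi = sum_i rho_i |(ii)_+) it yields
   sum_{i,j,t} rho_i lam i j t |(ij)_t) = Psi; where rho_i = 0 the choice of
   lam is irrelevant, since Psi vanishes on that row by positivity. *)
From HB Require Import structures.
From mathcomp Require Import all_boot all_order all_algebra.
Set Implicit Arguments. Unset Strict Implicit. Unset Printing Implicit Defensive.
Import Order.TTheory GRing.Theory Num.Theory.
Local Open Scope ring_scope.

Section Dilation.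
Variable R : realFieldType.

Lemma apply_channel_Pi_state (DA DF : nat) (lam : 'I_DA -> 'I_DF -> bool -> R)
    (p : 'I_DA -> R) i j t :
  apply_channel lam (Pi_state p) i j t = lam i j t * p i.
Proof.
rewrite /apply_channel (bigD1 i) //= [X in _ + X]big1 ?addr0 => [|k ki]; last first.
  apply: big1 => s _; apply: big1 => u _.
  by rewrite /Pi_state (eq_sym i) (negbTE ki) andbF mulr0 if_same.
rewrite big_bool /= [X in _ + X]big1 ?addr0 => [|u _]; last by rewrite /Pi_state mulr0 if_same.
by rewrite /Pi_state eqxx big_bool /sgmul; case: t => /=; rewrite ?addr0 ?add0r.
Qed.

Lemma marg_A_eq0 (DA DF : nat) (q : 'I_DA -> 'I_DF -> bool -> R) i :
  bct_state2 q -> marg_A q i = 0 -> forall j s, q i j s = 0.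
Proof.
move=> q_ge0 qi0 j s; apply/eqP; rewrite eq_le q_ge0 andbT -qi0 /marg_A.
rewrite (bigD1 j) //= (bigD1 s) //= -addrA lerDl.
by rewrite addr_ge0 // !sumr_ge0 // => k _; rewrite sumr_ge0.
Qed.

Definition conditional_channel (DA DF : nat) (rho : 'I_DA -> R)
    (Psi : 'I_DA -> 'I_DF -> bool -> R) : 'I_DA -> 'I_DF -> bool -> R :=
  fun k j t => if rho k == 0 then ((DF * 2)%:R)^-1 else Psi k j t / rho k.

Variables (DA DF : nat) (rho : 'I_DA -> R) (Psi : 'I_DA -> 'I_DF -> bool -> R).
Hypotheses (Psi_ge0 : bct_state2 Psi) (dil : is_dilation rho Psi).

Lemma is_channel_conditional :
  (0 < DF)%N -> bct_state rho -> is_channel (conditional_channel rho Psi).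
Proof.
move=> DF_gt0 rho_ge0 k; rewrite /conditional_channel; case: eqP => [_|/eqP rk0].
  split=> [j t|]; first by rewrite invr_ge0 ler0n.
  have DF2_neq0 : (DF * 2)%:R != 0 :> R by rewrite pnatr_eq0 muln_eq0 negb_or -lt0n DF_gt0.
  rewrite (eq_bigr (fun=> ((DF * 2)%:R)^-1 *+ 2)) => [|j _]; last first.
    by rewrite sumr_const card_bool.
  by rewrite sumr_const card_ord -mulrnA -[RHS](mulVf DF2_neq0) mulr_natr mulnC.
split=> [j t|]; first by apply: divr_ge0; [apply: Psi_ge0 | apply: rho_ge0].
under eq_bigr do rewrite -mulr_suml.
by rewrite -mulr_suml -/(marg_A Psi k) dil mulfV.
Qed.

Lemma conditional_channelK k j t :
  conditional_channel rho Psi k j t * rho k = Psi k j t.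
Proof.
rewrite /conditional_channel; case: eqP => [rk0|/eqP rk0]; last by rewrite divfK.
by rewrite rk0 mulr0 (marg_A_eq0 Psi_ge0) // dil.
Qed.

End Dilation.

Theorem proposition1 (R : realFieldType) (DA DF : nat)
  (hA : (1 < DA)%N) (hF : (1 < DF)%N)
  (rho : 'I_DA -> R) (Psi : 'I_DA -> 'I_DF -> bool -> R) :
  bct_det_state rho ->
  bct_det_state2 Psi ->
  is_dilation rho Psi ->
  exists lam : 'I_DA -> 'I_DF -> bool -> R,
    is_channel lam /\
    forall i j t, apply_channel lam (Pi_state rho) i j t = Psi i j t.
Proof.
move=> [rho_ge0 _] [Psi_ge0 _] dil.
exists (conditional_channel rho Psi); split.
  by apply: is_channel_conditional => //; apply: ltnW.
by move=> i j t; rewrite apply_channel_Pi_state conditional_channelK.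
Qed.
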